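(* For every positive integer $r$ there exists a Heffter space with exactly $r$ parallel classes.
   Context: A half-set of an abelian group $G$ of odd order $2v+1\ge7$ is a subset $V\subseteq G\setminus\{0\}$ containing exactly one element of each pair $\{g,-g\}$, $g\ne0$. A Heffter system on $V$ with block size $k$ is a partition of $V$ into blocks of size $k$, each summing to $0$ in $G$. A Heffter space over $G$ is a partial linear space (any two distinct points lie in at most one block) with point set a half-set $V$ of $G$, together with a resolution of its blocks into parallel classes (each a partition of $V$), every parallel class being a Heffter system on $V$; its degree is the number of parallel classes. *)

From HB Require Import structures.
From mathcomp Require Import all_boot all_order all_algebra.
Set Implicit Arguments. Unset Strict Implicit. Unset Printing Implicit Defensive.
Import GRing.Theory.
Local Open Scope ring_scope.

Definition half_set (G : finZmodType) (V : {set G}) : Prop :=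
  (0 \notin V) /\ (forall g : G, g != 0 -> (g \in V) != (- g \in V)).

Definition heffter_system (G : finZmodType) (V : {set G}) (k : nat)
    (P : {set {set G}}) : Prop :=
  partition P V /\
  (forall B, B \in P -> #|B| = k /\ \sum_(x in B) x = 0).

(* A Heffter space over G with point set the half-set V, block size k and
   degree r: r parallel classes P i (i < r), each a Heffter system on V,
   such that the blocks of all classes (counted with their class index)
   form a partial linear space: two distinct blocks share at most one point. *)
Definition heffter_space (G : finZmodType) (V : {set G}) (k r : nat)
    (P : 'I_r -> {set {set G}}) : Prop :=
  half_set V /\
  (forall i, heffter_system V k (P i)) /\
  (forall (i j : 'I_r) (B B' : {set G}), B \in P i -> B' \in P j ->
     (i, B) != (j, B') -> (#|B :&: B'| <= 1)%N).

From mathcomp Require Import all_boot all_order all_algebra.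
From mathcomp Require Import finfield cyclic zify.
Set Implicit Arguments. Unset Strict Implicit. Unset Printing Implicit Defensive.
Import GRing.Theory.

(* Let k = p_0 ... p_(r-1) be a product of distinct odd primes, N = k ^ r, and g a generator
   of the multiplicative group of a finite field with 2MN + 1 elements. The points are
   g ^ (a + 2M E(t)) for a < M and t in the cube [0, k)^r, where E maps the cube bijectively
   onto Z/N; as g ^ (MN) = -1 and N is odd, these form a half-set. The i-th parallel class
   consists of the lines of the cube in direction i, and distinct lines share at most one
   point. E is chosen so that, writing t_i = p_i v + u with u < p_i, the coordinate t_i
   contributes (N / p_i) u plus a term depending on v only; every line is thus a union of
   cosets of the group of p_i-th roots of unity, and its points sum to 0. *)

Lemma eq_mod_mulD d n q q' s s' :
  s < d -> s' < d -> d * q + s = d * q' + s' %[mod d * n] ->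
  s = s' /\ q = q' %[mod n].
Proof.
move=> lt_sd lt_s'd E; have d_gt0 : 0 < d by apply: leq_ltn_trans lt_sd.
have eq_s : s = s'.
  have /= := congr1 (modn^~ d) E; rewrite !modn_dvdm ?dvdn_mulr //.
  by rewrite ![d * _]mulnC !modnMDl !modn_small.
split=> //; move: E; rewrite -eq_s => /eqP; rewrite eqn_modDr -!muln_modr.
by rewrite eqn_pmul2l // => /eqP.
Qed.

Lemma eqn_mod_coprime_mul2l d m a b :
  coprime d m -> (m * a == m * b %[mod d]) = (a == b %[mod d]).
Proof.
move=> co_dm; wlog le_ba : a b / b <= a.
  by move=> W; case: (leqP b a) => [|/ltnW] ?; [|rewrite eq_sym [RHS]eq_sym]; apply: W.
by rewrite !eqn_mod_dvd ?leq_mul2l ?le_ba ?orbT // -mulnBr Gauss_dvdr.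
Qed.

Definition place_value (c : nat -> nat) (n : nat) := \prod_(j < n) c j.

Lemma place_valueS c n : place_value c n.+1 = place_value c n * c n.
Proof. by rewrite /place_value big_ord_recr. Qed.

Lemma place_value_sum_lt (c : nat -> nat) r (w : 'I_r -> nat) :
  (forall i, w i < c i) -> \sum_(i < r) place_value c i * w i < place_value c r.
Proof.
elim: r w => [|r IH] w lt_wc; first by rewrite big_ord0 /place_value big_ord0.
rewrite big_ord_recr place_valueS /=.
have lt_low := IH (fun i => w (widen_ord (leqnSn r) i)) (fun i => lt_wc _).
rewrite -addSn (leq_trans (leq_add lt_low (leqnn _))) // -mulnS leq_mul2l.
by rewrite [_ < _]lt_wc orbT.
Qed.

Lemma place_value_sum_inj (c : nat -> nat) r (w w' : 'I_r -> nat) :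
  (forall i, w i < c i) -> (forall i, w' i < c i) ->
  \sum_(i < r) place_value c i * w i = \sum_(i < r) place_value c i * w' i -> w =1 w'.
Proof.
elim: r w w' => [|r IH] w w' lt_wc lt_w'c; first by move=> _ [].
rewrite !big_ord_recr /= ![_ + place_value c r * _]addnC ![place_value c r * _]mulnC.
move/(congr1 (edivn^~ (place_value c r))); rewrite /= !edivn_eq ?place_value_sum_lt //.
pose wl i := w (widen_ord (leqnSn r) i); pose wl' i := w' (widen_ord (leqnSn r) i).
case=> eq_top /(IH wl wl' (fun i => lt_wc _) (fun i => lt_w'c _)) eq_low i.
case: (unliftP ord_max i) => [j ->|->] //.
have -> : lift ord_max j = widen_ord (leqnSn r) j by apply: val_inj; exact: lift_max.
exact: eq_low.
Qed.

Definition ffun_upd (I : finType) (T : Type) (t : {ffun I -> T}) (i : I) (y : T) :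
    {ffun I -> T} :=
  [ffun j => if j == i then y else t j].

Lemma ffun_upd_id (I : finType) (T : Type) (t : {ffun I -> T}) i : ffun_upd t i (t i) = t.
Proof. by apply/ffunP => j; rewrite ffunE; case: eqP => // ->. Qed.

Lemma ffun_upd_inj (I : finType) (T : Type) (t : {ffun I -> T}) i : injective (ffun_upd t i).
Proof. by move=> y y' /ffunP /(_ i); rewrite !ffunE eqxx. Qed.

Lemma eq_ffun_upd (I : finType) (T : Type) (t t' : {ffun I -> T}) i y y' :
  ffun_upd t i y = ffun_upd t' i y' -> ffun_upd t i =1 ffun_upd t' i.
Proof.
move=> /ffunP E z; apply/ffunP => j; rewrite !ffunE.
by case: eqP => // /eqP ji; move: (E j); rewrite !ffunE (negbTE ji).
Qed.

Section CubeCode.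

Variables (r : nat) (p : nat -> nat).
Hypotheses (p_gt0 : forall i, 0 < p i)
  (p_coprime : forall i j : 'I_r, i != j -> coprime (p i) (p j)).

Definition prod_but (n : nat) := \prod_(j < r | j != n :> nat) p j.

Local Notation k := (\prod_(i < r) p i).
Local Notation L := (place_value prod_but r).

Lemma prod_but_gt0 n : 0 < prod_but n.
Proof. exact: prodn_cond_gt0. Qed.

Lemma prod_but_split (i : 'I_r) : k = p i * prod_but i.
Proof. by rewrite (bigD1 i). Qed.

Lemma coprime_prod_but (i : 'I_r) : coprime (p i) (prod_but i).
Proof.
apply: (big_ind (coprime (p i))) => [|m n co_m co_n|j neq_ji]; first exact: coprimen1.
  by rewrite coprimeMr co_m.
by apply: p_coprime; rewrite eq_sym.
Qed.

Lemma dvdn_prod_but (i j : 'I_r) : i != j -> p j %| prod_but i.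
Proof. by move=> neq_ij; rewrite /prod_but (bigD1 j) 1?eq_sym ?dvdn_mulr. Qed.

Lemma sum_prod_but_mod (u : 'I_r -> nat) (j : 'I_r) :
  \sum_(i < r) prod_but i * u i = prod_but j * u j %[mod p j].
Proof.
have /eqP dvd_rest : p j %| \sum_(i < r | i != j) prod_but i * u i.
  by apply: dvdn_sum => i neq_ij; rewrite dvdn_mulr // dvdn_prod_but.
by rewrite (bigD1 j) //= -modnDmr dvd_rest addn0.
Qed.

Lemma prod_but_sum_inj (u u' : 'I_r -> nat) :
  (forall i, u i < p i) -> (forall i, u' i < p i) ->
  \sum_(i < r) prod_but i * u i = \sum_(i < r) prod_but i * u' i %[mod k] -> u =1 u'.
Proof.
move=> lt_up lt_u'p eq_sum j; rewrite -(modn_small (lt_up j)) -(modn_small (lt_u'p j)).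
apply/eqP; rewrite -(eqn_mod_coprime_mul2l _ _ (coprime_prod_but j)).
rewrite -(sum_prod_but_mod u) -(sum_prod_but_mod u').
have dvd_pk : p j %| k by rewrite (prod_but_split j) dvdn_mulr.
by rewrite -(modn_dvdm _ dvd_pk) eq_sum modn_dvdm.
Qed.

Definition digit_code (i y : nat) : nat :=
  L * prod_but i * (y %% p i) + place_value prod_but i * (y %/ p i).

Definition cube_code (t : {ffun 'I_r -> 'I_k}) : nat := \sum_(i < r) digit_code i (t i).

Lemma cube_codeE t : cube_code t =
  L * \sum_(i < r) prod_but i * (t i %% p i) + \sum_(i < r) place_value prod_but i * (t i %/ p i).
Proof.
rewrite /cube_code big_split big_distrr /=; congr (_ + _).
by apply: eq_bigr => i _; rewrite mulnA.
Qed.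

Lemma place_value_prod_but : L * k = k ^ r.
Proof.
rewrite /place_value -big_split /= (eq_bigr (fun=> k)) ?prod_nat_const ?card_ord //.
by move=> i _; rewrite mulnC -prod_but_split.
Qed.

Lemma cube_code_inj_mod t t' : cube_code t = cube_code t' %[mod k ^ r] -> t = t'.
Proof.
have div_lt (s : {ffun 'I_r -> 'I_k}) i : s i %/ p i < prod_but i.
  by rewrite ltn_divLR // mulnC -prod_but_split.
rewrite -place_value_prod_but !cube_codeE.
case/eq_mod_mulD; try exact: place_value_sum_lt (div_lt _).
move=> /(place_value_sum_inj (div_lt t) (div_lt t')) eq_div.
move=> /(prod_but_sum_inj (fun i => ltn_pmod _ (p_gt0 i)) (fun i => ltn_pmod _ (p_gt0 i))) eq_mod.
apply/ffunP => i; apply: val_inj => /=.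
by rewrite (divn_eq (t i) (p i)) (divn_eq (t' i) (p i)) eq_div eq_mod.
Qed.

Lemma cube_code_upd t i y :
  cube_code (ffun_upd t i y) = digit_code i y + \sum_(j < r | j != i) digit_code j (t j).
Proof.
rewrite /cube_code (bigD1 i) //= ffunE eqxx; congr (_ + _).
by apply: eq_bigr => j neq_ji; rewrite ffunE (negbTE neq_ji).
Qed.

End CubeCode.

Fixpoint prime_seq (n : nat) : nat :=
  s2val (prime_above (if n is n'.+1 then prime_seq n' else 2)).

Lemma prime_seq_prime n : prime (prime_seq n).
Proof. by case: n => [|n] /=; case: prime_above. Qed.

Lemma prime_seq_lt n : prime_seq n < prime_seq n.+1.
Proof. by rewrite /=; case: prime_above. Qed.

Lemma prime_seq_gt2 n : 2 < prime_seq n.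
Proof.
elim: n => [|n IH]; first by rewrite /=; case: prime_above.
exact: ltn_trans IH (prime_seq_lt n).
Qed.

Lemma prime_seq_odd n : odd (prime_seq n).
Proof.
by case: (even_prime (prime_seq_prime n)) (prime_seq_gt2 n) => [->|].
Qed.

Lemma prime_seq_coprime m n : m != n -> coprime (prime_seq m) (prime_seq n).
Proof.
have mono : {homo prime_seq : i j / i < j}.
  by apply: homo_ltn; [apply: ltn_trans | exact: prime_seq_lt].
rewrite prime_coprime ?prime_seq_prime // dvdn_prime2 ?prime_seq_prime //.
by rewrite neq_ltn => /orP [] /mono; rewrite neq_ltn => ->; rewrite ?orbT.
Qed.

Section Cube.

Local Open Scope ring_scope.

Variables (G : finZmodType) (X : finType) (r k : nat).
Variable phi : X * {ffun 'I_r -> 'I_k} -> G.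

Definition cube_points : {set G} := [set phi z | z : X * {ffun 'I_r -> 'I_k}].

Definition cube_line (i : 'I_r) z : {set G} := [set phi (z.1, ffun_upd z.2 i y) | y : 'I_k].

Definition cube_class (i : 'I_r) : {set {set G}} :=
  [set cube_line i z | z : X * {ffun 'I_r -> 'I_k}].

Hypothesis phi_inj : injective phi.

Lemma mem_cube_line i z : phi z \in cube_line i z.
Proof.
by apply/imsetP; exists (z.2 i); rewrite // ffun_upd_id -surjective_pairing.
Qed.

Lemma cube_line_meet i z z' x :
  x \in cube_line i z -> x \in cube_line i z' -> cube_line i z = cube_line i z'.
Proof.
case/imsetP=> y _ ->; case/imsetP=> y' _ /phi_inj [eq1 eq2].
by apply: eq_imset => y0; rewrite eq1 (eq_ffun_upd eq2).
Qed.

Lemma card_cube_line i z : #|cube_line i z| = k.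
Proof.
rewrite card_imset ?card_ord // => y y' /phi_inj.
by case; apply: ffun_upd_inj.
Qed.

Lemma cube_class_partition i : partition (cube_class i) cube_points.
Proof.
apply/and3P; split.
- apply/eqP/setP => x; apply/bigcupP/imsetP => [[_ /imsetP [z _ ->]]|[z _ ->]].
    by case/imsetP=> y _ ->; exists (z.1, ffun_upd z.2 i y).
  by exists (cube_line i z); [apply: imset_f | apply: mem_cube_line].
- apply/trivIsetP => _ _ /imsetP [z _ ->] /imsetP [z' _ ->] neq_lines.
  apply/pred0P => x /=; apply/negP => /andP [x_z x_z'].
  by move/eqP: neq_lines; apply; apply: cube_line_meet x_z x_z'.
- apply/imsetP => [[z _ /esym/setP/(_ (phi z))]].
  by rewrite mem_cube_line inE.
Qed.

Lemma card_cube_line_meet_le1 i j z z' :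
  (i, cube_line i z) != (j, cube_line j z') -> (#|cube_line i z :&: cube_line j z'| <= 1)%N.
Proof.
have [<-{j} neq_lines|neq_ij _] := eqVneq i j.
  rewrite leq_eqVlt ltnS leqn0 cards_eq0; apply/orP; right; apply/eqP/setP => x.
  rewrite !inE; apply/negP => /andP [x_z x_z'].
  by move: neq_lines; rewrite (cube_line_meet x_z x_z') eqxx.
apply/card_le1_eqP => x1 x2 /setIP [/imsetP [y1 _ ->] /imsetP [y1' _ E1]].
case/setIP=> /imsetP [y2 _ ->] /imsetP [y2' _ E2].
move/phi_inj: E1 => [_ /ffunP /(_ i)]; rewrite !ffunE eqxx (negbTE neq_ij) => ->.
by move/phi_inj: E2 => [_ /ffunP /(_ i)]; rewrite !ffunE eqxx (negbTE neq_ij) => ->.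
Qed.

Lemma cube_heffter_space :
  half_set cube_points ->
  (forall i z, \sum_(y < k) phi (z.1, ffun_upd z.2 i y) = 0) ->
  heffter_space cube_points k cube_class.
Proof.
move=> half_cube line_sum0; split=> //; split=> [i|i j _ _ /imsetP [z _ ->] /imsetP [z' _ ->]].
  split=> [|_ /imsetP [z _ ->]]; first exact: cube_class_partition.
  rewrite card_cube_line big_imset /= ?line_sum0 //.
  by move=> y y' _ _ /phi_inj; case; apply: ffun_upd_inj.
exact: card_cube_line_meet_le1.
Qed.

End Cube.

Lemma half_set_of_card (G : finZmodType) (V : {set G}) :
  {in V &, forall x y, x != (- y)%R} -> #|G| = (#|V|.*2).+1 -> half_set V.
Proof.
move=> oppV cardG.
have V0 : 0%R \notin V.
  by apply/negP => V0; move: (oppV _ _ V0 V0); rewrite oppr0 eqxx.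
pose W := V :|: [set x | (- x)%R \in V].
have disjV : V :&: [set x | (- x)%R \in V] = set0.
  apply/setP => x; rewrite !inE; apply/negP => /andP [Vx VNx].
  by move: (oppV _ _ Vx VNx); rewrite opprK eqxx.
have cardW : #|W| = #|[set~ (0 : G)%R]|.
  rewrite cardsU disjV cards0 subn0 cardsC1 cardG -addnn.
  by rewrite -(card_preimset _ (@oppr_inj G)); congr (_ + #|_|).
have W_all : W =i [set~ (0 : G)%R].
  apply/subset_cardP/subsetP => // x; rewrite !inE; apply: contraTN => /eqP ->.
  by rewrite oppr0 orbb.
split=> // g g0; move: (W_all g) (oppV g (- g)%R); rewrite !inE g0 opprK eqxx.
by case: (g \in V); case: (_ \in V) => // _ /(_ isT isT).
Qed.

Lemma sum_ord_mul_split (R : nmodType) (c p : nat) (F : nat -> R) :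
  (\sum_(y < c * p) F y = \sum_(v < c) \sum_(u < p) F (v * p + u)%N)%R.
Proof.
rewrite -(big_mkord xpredT) big_nat_mul big_mkord; apply: eq_bigr => v _.
rewrite -{1}(add0n (v * p)) big_addn mulSn addnK big_mkord.
by apply: eq_bigr => u _; rewrite addnC.
Qed.

Lemma sum_expr_eq1_eq0 (R : idomainType) (z : R) n :
  (z ^+ n = 1 -> z != 1 -> \sum_(i < n) z ^+ i = 0)%R.
Proof.
move=> zn1 z_neq1; apply/eqP; move: (subrX1 z n); rewrite zn1 subrr => /esym/eqP.
by rewrite mulf_eq0 subr_eq0 (negbTE z_neq1).
Qed.

Lemma sum_prim_root_blocks (R : idomainType) (z : R) (p n : nat) (f : nat -> R) :
  1 < p -> p.-primitive_root%R z -> p %| n ->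
  (\sum_(y < n) f (y %/ p)%N * z ^+ (y %% p)%N = 0)%R.
Proof.
move=> p_gt1 z_prim /dvdnP [c ->].
rewrite (sum_ord_mul_split _ _ (fun y => f (y %/ p)%N * z ^+ (y %% p)%N)%R) big1 // => v _.
have p_gt0 : 0 < p by apply: ltnW.
rewrite (eq_bigr (fun u : 'I_p => f v * z ^+ u)%R) => [|u _]; last first.
  by rewrite modnMDl divnMDl // modn_small ?divn_small ?addn0.
rewrite -mulr_sumr sum_expr_eq1_eq0 ?mulr0 ?(prim_expr_order z_prim) //.
by rewrite -[z]expr1 -(prim_order_dvd z_prim) gtnNdvd.
Qed.

Lemma prim_expr_half (R : idomainType) (z : R) n :
  (n.*2).-primitive_root%R z -> (z ^+ n = -1)%R.
Proof.
move=> z_prim; have n_gt0 : 0 < n by rewrite -double_gt0 (prim_order_gt0 z_prim).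
have : (z ^+ n ^+ 2 == 1)%R by rewrite -exprM muln2 prim_expr_order.
rewrite sqrf_eq1 -(prim_order_dvd z_prim) => /orP [/dvdn_leq|/eqP //].
by rewrite -addnn; lia.
Qed.

Section FieldPoints.

Variables (F : fieldType) (g : F) (M N : nat).
Hypothesis g_prim : (2 * M * N).-primitive_root%R g.

Definition field_point (a e : nat) : F := (g ^+ (a + 2 * M * e)%N)%R.

Lemma field_point_inj_mod a a' e e' : a < M -> a' < M ->
  field_point a e = field_point a' e' -> a = a' /\ e = e' %[mod N].
Proof.
move=> lt_aM lt_a'M /eqP; rewrite (eq_prim_root_expr g_prim) => /eqP.
rewrite ![a + _]addnC [a' + _]addnC.
by apply: eq_mod_mulD; lia.
Qed.

Lemma field_point_neq_opp a a' e e' : odd N -> a < M -> a' < M ->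
  field_point a e != (- field_point a' e')%R.
Proof.
move=> N_odd lt_aM lt_a'M; apply/eqP.
have g_half : (g ^+ (M * N)%N = -1)%R by apply: prim_expr_half; rewrite -mul2n mulnA.
rewrite -mulN1r -g_half -exprD => /eqP; rewrite (eq_prim_root_expr g_prim) => /eqP.
have -> : M * N + (a' + 2 * M * e') = 2 * M * (e' + N./2) + (M + a').
  by rewrite -[in LHS](odd_double_half N) N_odd -muln2; lia.
by rewrite addnC; case/eq_mod_mulD; lia.
Qed.

End FieldPoints.

Lemma exists_finField_card_1_mod n : 0 < n -> exists F : finFieldType, n %| #|F|.-1.
Proof.
move=> n_gt0; have [P lt_nP P_prime] := prime_above n.
have e_gt0 : 0 < totient n by rewrite totient_gt0.
have [F _ cardF] := pPrimePowerField P_prime e_gt0.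
exists F; rewrite cardF -subn1 -eqn_mod_dvd ?expn_gt0 ?prime_gt0 //.
by apply/eqP/Euler_exp_totient; rewrite prime_coprime // gtnNdvd.
Qed.

Lemma finField_prim_root (F : finFieldType) : exists g : F, (#|F|.-1).-primitive_root%R g.
Proof.
have F_gt1 := card_finNzRing_gt1 F.
have n_gt0 : 0 < #|F|.-1 by rewrite -subn1 subn_gt0.
have : has (#|F|.-1).-primitive_root%R (enum [set~ (0 : F)%R]).
  apply: has_prim_root n_gt0 _ (enum_uniq _) _.
    apply/allP => x; rewrite mem_enum !inE unity_rootE => x_neq0.
    by rewrite -(inj_eq (mulfI x_neq0)) mulr1 -exprS prednK ?expf_card // ltnW.
  by rewrite -cardE cardsC1.
by case/hasP => g _; exists g.
Qed.

Section FieldCube.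

Variables (r : nat) (p : nat -> nat).
Hypotheses (p_gt1 : forall i, 1 < p i) (p_odd : forall i, odd (p i))
  (p_coprime : forall i j : 'I_r, i != j -> coprime (p i) (p j)).

Local Notation k := (\prod_(i < r) p i).
Local Notation N := (k ^ r).

Variables (F : finFieldType) (g : F) (M : nat).
Hypotheses (cardF : #|F| = (2 * M * N).+1) (g_prim : (2 * M * N).-primitive_root%R g).

Definition field_cube_point (z : 'I_M * {ffun 'I_r -> 'I_k}) : F :=
  field_point g M z.1 (cube_code z.2).

Let p_gt0 i : 0 < p i := ltnW (p_gt1 i).

Lemma field_cube_point_inj : injective field_cube_point.
Proof.
move=> [a t] [a' t'] /(field_point_inj_mod g_prim (ltn_ord a) (ltn_ord a')) /= [eq_a].
move/(cube_code_inj_mod p_gt0 p_coprime) => ->.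
by congr pair; apply: val_inj.
Qed.

Lemma odd_cube_order : odd N.
Proof.
rewrite oddX; apply/orP; right; apply: (big_ind odd) => // m n odd_m odd_n.
by rewrite oddM odd_m.
Qed.

Lemma half_set_field_cube : half_set (cube_points field_cube_point).
Proof.
apply: half_set_of_card.
  move=> _ _ /imsetP [[a t] _ ->] /imsetP [[a' t'] _ ->].
  exact: field_point_neq_opp g_prim _ _ _ _ odd_cube_order (ltn_ord a) (ltn_ord a').
rewrite cardF card_imset; last exact: field_cube_point_inj.
by rewrite card_prod card_ffun !card_ord -mul2n mulnA.
Qed.

Lemma field_cube_line_sum i z :
  (\sum_(y < k) field_cube_point (z.1, ffun_upd z.2 i y) = 0)%R.
Proof.
case: z => a t /=; set L := place_value (prod_but r p) r; set c := prod_but r p i.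
have N_split : N = L * c * p i.
  by rewrite -place_value_prod_but (prod_but_split _ i) [p i * _]mulnC mulnA.
have z_prim : (p i).-primitive_root%R (g ^+ (2 * M * L * c)%N)%R.
  have -> : 2 * M * L * c = 2 * M * N %/ p i by rewrite N_split !mulnA mulnK.
  by apply: (dvdn_prim_root g_prim); rewrite N_split; apply/dvdn_mull/dvdn_mull.
pose b := a + 2 * M * \sum_(j < r | j != i) digit_code r p j (t j).
pose f v := (g ^+ (b + 2 * M * place_value (prod_but r p) i * v)%N)%R.
rewrite (eq_bigr (fun y : 'I_k => f (y %/ p i)%N * g ^+ (2 * M * L * c)%N ^+ (y %% p i)%N)%R)
  => [|y _].
  by rewrite sum_prim_root_blocks // (prod_but_split _ i) dvdn_mulr.
rewrite /field_cube_point /field_point /f /b cube_code_upd -!exprM -exprD.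
by congr (g ^+ _)%R; rewrite /= /L /c {1}/digit_code; nia.
Qed.

Lemma heffter_space_field_cube :
  heffter_space (cube_points field_cube_point) k (cube_class field_cube_point).
Proof.
apply: cube_heffter_space.
- exact: field_cube_point_inj.
- exact: half_set_field_cube.
- exact: field_cube_line_sum.
Qed.

End FieldCube.

Theorem mainTheorem12 (r : nat) : (0 < r)%N ->
  exists (G : finZmodType) (V : {set G}) (k : nat) (P : 'I_r -> {set {set G}}),
    odd #|G| /\ (7 <= #|G|)%N /\ heffter_space V k P.
Proof.
move=> r_gt0; pose p := prime_seq; pose N := (\prod_(i < r) p i) ^ r.
have p_gt1 i : 1 < p i by apply: ltnW (prime_seq_gt2 i).
have p_coprime (i j : 'I_r) : i != j -> coprime (p i) (p j) := @prime_seq_coprime i j.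
have k_ge3 : 3 <= \prod_(i < r) p i.
  rewrite (prod_but_split _ (Ordinal r_gt0)) (leq_trans (prime_seq_gt2 0)) //.
  by rewrite leq_pmulr // prod_but_gt0 // => i; apply: ltnW.
have N_ge3 : 3 <= N.
  rewrite (leq_trans k_ge3) // -{1}(expn1 (\prod_(i < r) p i)).
  by rewrite /N leq_pexp2l // (leq_trans _ k_ge3).
have [F dvd_F] : exists F : finFieldType, 2 * N %| #|F|.-1.
  by apply: exists_finField_card_1_mod; rewrite muln_gt0 (leq_trans _ N_ge3).
pose M := #|F|.-1 %/ (2 * N); have F_gt1 := card_finNzRing_gt1 F.
have cardF : #|F| = (2 * M * N).+1.
  by rewrite /M mulnAC mulnC (divnK dvd_F) prednK // ltnW.
have [g] := finField_prim_root F; rewrite cardF /= => g_prim.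
pose phi := @field_cube_point r p F g M.
exists F, (cube_points phi), (\prod_(i < r) p i), (cube_class phi); split; [|split].
- by rewrite cardF /= -mulnA mul2n odd_double.
- move: F_gt1; rewrite cardF !ltnS !muln_gt0 => /andP [/andP [_ M_gt0] _].
  exact: leq_mul (leq_mul (leqnn 2) M_gt0) N_ge3.
- exact: (heffter_space_field_cube (M := M) p_gt1 prime_seq_odd p_coprime cardF g_prim).
Qed.
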